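(* Let $\psi\in C^2(\mathbb R;\mathbb R_+)$ with $\lim_{r\to\infty}\psi(r)=\infty$, $0<\psi'\le1$ and $\psi''\le0$. Fix $y\in\mathbb R^d$ and set $V_y(x):=\psi(\log(1+|x-y|^2))$. Then for all $t\ge0$ and $x\in\mathbb R^d$, $$\mathscr L_tV_y(x)\le 2\left(\frac{|a_t(x)|+\langle x-y,b_t(x)\rangle^++g^\nu_t(x)}{1+|x-y|^2}+2H^\nu_t(x,y)\right),$$ where $H^\nu_t(x,y):=\int_{B_\ell^c}\log\big(1+\frac{|z|}{1+|x-y|}\big)\nu_{t,x}(dz)$.
   Context: Fix $d\ge1$, $\ell\in(0,1/\sqrt2]$, $B_\ell=\{|z|<\ell\}$. $a:\mathbb R_+\times\mathbb R^d\to$ symmetric nonnegative definite matrices and $b:\mathbb R_+\times\mathbb R^d\to\mathbb R^d$ measurable; $\{\nu_{t,x}\}$ Lévy measures with $g^\nu_t(x):=\int_{B_\ell}|z|^2\nu_{t,x}(dz)<\infty$, $\nu_{t,x}(B_\ell^c)<\infty$. $\mathscr L_tf(x):=\mathrm{tr}(a_t(x)\nabla^2f(x))+b_t(x)\cdot\nabla f(x)+\int(f(x+z)-f(x)-\mathbf 1_{|z|\le\ell}z\cdot\nabla f(x))\nu_{t,x}(dz)$; $r^+:=\max(r,0)$. *)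

From HB Require Import structures.
From mathcomp Require Import all_boot all_order all_algebra.
From mathcomp Require Import all_classical all_reals all_analysis.
Set Implicit Arguments. Unset Strict Implicit. Unset Printing Implicit Defensive.
Import Order.TTheory GRing.Theory Num.Theory.
Import numFieldNormedType.Exports.
Local Open Scope classical_set_scope.
Local Open Scope ring_scope.

(* R^d is represented by row vectors 'rV[R]_d.  As a measurable space we
   equip it with its Borel sigma-algebra (generated by the open sets). *)
Definition Rd (R : realType) (d : nat) : Type :=
  g_sigma_algebraType (@open 'rV[R]_d).

Definition enorm (R : realType) (d : nat) (x : 'rV[R]_d) : R :=
  Num.sqrt (\sum_(i < d) x 0 i ^+ 2).
Definition dotp (R : realType) (d : nat) (x y : 'rV[R]_d) : R :=
  \sum_(i < d) x 0 i * y 0 i.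

Definition ebasis (R : realType) (d : nat) (i : 'I_d) : 'rV[R]_d :=
  delta_mx 0 i.

Definition grad (R : realType) (d : nat) (f : 'rV[R]_d -> R) (x : 'rV[R]_d)
  : 'rV[R]_d := \row_i derive f x (ebasis R i).
Definition hess (R : realType) (d : nat) (f : 'rV[R]_d -> R) (x : 'rV[R]_d)
  : 'M[R]_d :=
  \matrix_(i, j) derive (fun y => derive f y (ebasis R i)) x (ebasis R j).

(* Extended-real valued (the jump integral may be +oo). *)
Definition levy_gen (R : realType) (d : nat) (ell : R) (a : 'M[R]_d)
  (b : 'rV[R]_d) (nu : {measure set (Rd R d) -> \bar R})
  (f : 'rV[R]_d -> R) (x : 'rV[R]_d) : \bar R :=
  ((\tr (a *m hess f x) + dotp b (grad f x))%:E +
   \int[nu]_(z in [set: Rd R d])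
      (f (x + z) - f x - (if enorm z <= ell then dotp z (grad f x) else 0))%:E)%E.

Definition gnu (R : realType) (d : nat) (ell : R)
  (nu : {measure set (Rd R d) -> \bar R}) : \bar R :=
  \int[nu]_(z in [set z : Rd R d | enorm z < ell]) (enorm z ^+ 2)%:E.

Definition Hnu (R : realType) (d : nat) (ell : R)
  (nu : {measure set (Rd R d) -> \bar R}) (x y : 'rV[R]_d) : \bar R :=
  \int[nu]_(z in [set z : Rd R d | ell <= enorm z])
     (ln (1 + enorm z / (1 + enorm (x - y))))%:E.

From HB Require Import structures.
From mathcomp Require Import all_boot all_order all_algebra.
From mathcomp Require Import all_classical all_reals all_analysis.
From mathcomp Require Import measurable_realfun ring lra.

Set Implicit Arguments.
Unset Strict Implicit.
Unset Printing Implicit Defensive.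

Import Order.TTheory GRing.Theory Num.Theory.
Import numFieldNormedType.Exports.
Local Open Scope classical_set_scope.
Local Open Scope ring_scope.

(* Write phi r := psi (ln (1 + r)), so that V_y x = phi |x - y|^2.  The gradient
   of V_y is 2 phi'(r) (x - y) and its Hessian 4 phi''(r) (x - y)^T (x - y)
   + 2 phi'(r) I, with r = |x - y|^2.  Since 0 < phi' <= 1/(1 + r) and
   phi'' <= 0, the diffusion and drift parts are at most
   2 (tr a + <x - y, b>^+) / (1 + r).  Concavity of phi bounds a compensated
   jump by |z|^2 / (1 + r), and concavity of psi together with psi' <= 1 bounds
   any jump by ln ((1 + |x - y + z|^2) / (1 + r)) <= 4 ln (1 + |z| / (1 + |x - y|)).
   Integrating these pointwise bounds against nu gives the two jump terms. *)

Section Euclidean.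
Variables (R : realType) (d : nat).
Implicit Types u v w : 'rV[R]_d.

Lemma dotpC u v : dotp u v = dotp v u.
Proof. by apply: eq_bigr => i _; rewrite mulrC. Qed.

Lemma dotpDl u v w : dotp (u + v) w = dotp u w + dotp v w.
Proof. by rewrite /dotp -big_split; apply: eq_bigr => i _; rewrite mxE mulrDl. Qed.

Lemma dotpZl k u v : dotp (k *: u) v = k * dotp u v.
Proof. by rewrite /dotp mulr_sumr; apply: eq_bigr => i _; rewrite mxE mulrA. Qed.

Lemma dotpZr k u v : dotp u (k *: v) = k * dotp u v.
Proof. by rewrite dotpC dotpZl dotpC. Qed.

Lemma dotp_ebasis u (i : 'I_d) : dotp u (ebasis R i) = u 0 i.
Proof.
rewrite /dotp (bigD1 i) //= big1 => [|j ji]; first by rewrite !mxE !eqxx mulr1 addr0.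
by rewrite !mxE (negbTE ji) andbF mulr0.
Qed.

Lemma dotp_ebasis2 (i j : 'I_d) : dotp (ebasis R i) (ebasis R j) = (i == j)%:R.
Proof. by rewrite dotp_ebasis mxE eqxx eq_sym. Qed.

Lemma enorm_ge0 u : 0 <= enorm u.
Proof. exact: sqrtr_ge0. Qed.

Lemma sqr_enorm u : enorm u ^+ 2 = dotp u u.
Proof. by rewrite sqr_sqrtr //; apply: sumr_ge0 => i _; exact: sqr_ge0. Qed.

Lemma sqr_enormD u v :
  enorm (u + v) ^+ 2 = enorm u ^+ 2 + 2 * dotp u v + enorm v ^+ 2.
Proof. by rewrite !sqr_enorm !dotpDl ![dotp _ (u + v)]dotpC !dotpDl [dotp v u]dotpC; ring. Qed.

Lemma sqr_enormZ k u : enorm (k *: u) ^+ 2 = k ^+ 2 * enorm u ^+ 2.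
Proof. by rewrite !sqr_enorm dotpZl dotpZr mulrA. Qed.

Lemma dotp_enorm0 u v : enorm u = 0 -> dotp u v = 0.
Proof.
move=> u0; apply: big1 => i _.
suff -> : u 0 i = 0 by rewrite mul0r.
have /eqP := sqr_enorm u; rewrite u0 expr0n /= eq_sym psumr_eq0 => [/allP ui|j _]; last exact: sqr_ge0.
by apply/eqP; rewrite -sqrf_eq0; apply: ui; rewrite mem_index_enum.
Qed.

Lemma dotp_le_enorm u v : dotp u v <= enorm u * enorm v.
Proof.
have [u0|u0] := eqVneq (enorm u) 0; first by rewrite dotp_enorm0 // u0 mul0r.
have [v0|v0] := eqVneq (enorm v) 0; first by rewrite dotpC dotp_enorm0 // v0 mulr0.
have p0 : 0 < enorm u * enorm v by rewrite mulr_gt0 // lt0r ?u0 ?v0 enorm_ge0.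
(* expand 0 <= | |v| u - |u| v |^2 *)
have := sqr_ge0 (enorm (enorm v *: u - enorm u *: v)).
rewrite sqr_enormD -scaleNr !sqr_enormZ dotpZl dotpZr; nra.
Qed.

End Euclidean.

Lemma mxtrace_mul_outerD_scalar (R : comRingType) n (A : 'M[R]_n) (u : 'rV[R]_n) (c k : R) :
  \tr (A *m (c *: (u^T *m u) + k%:M)) = c * (u *m A *m u^T) 0 0 + k * \tr A.
Proof.
rewrite mulmxDr mul_mx_scalar -scalemxAr !mxtraceD !mxtraceZ.
by rewrite mulmxA mxtrace_mulC trace_mx11 mulmxA.
Qed.

Lemma psd_mxtrace_ge0 (R : numDomainType) n (A : 'M[R]_n) :
  (forall v : 'rV[R]_n, 0 <= (v *m A *m v^T) 0 0) -> 0 <= \tr A.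
Proof.
move=> A_psd; apply: sumr_ge0 => i _.
by have := A_psd (delta_mx 0 i); rewrite -rowE trmx_delta -colE !mxE.
Qed.

Section RealInequalities.
Variable R : realType.

Lemma invsqrt2_le1 : (Num.sqrt 2 : R)^-1 <= 1.
Proof. by rewrite invf_le1 ?sqrtr_gt0 // -[X in X <= _]sqrtr1 ler_wsqrtr // ler1n. Qed.

Lemma ln1D_ge0 (r : R) : 0 <= r -> 0 <= ln (1 + r).
Proof. by move=> r0; rewrite ln_ge0 // lerDl. Qed.

Lemma div1D_le_ln1D (w : R) : 0 <= w -> w / (1 + w) <= ln (1 + w).
Proof.
move=> w0; have w1 : 0 < 1 + w by lra.
have w_gtN1 : -1 < - (w / (1 + w)) by rewrite ltrN2 ltr_pdivrMr //; lra.
have -> : ln (1 + w) = - ln (1 - w / (1 + w)).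
  by rewrite -lnV ?posrE; [congr ln; field|rewrite subr_gt0 ltr_pdivrMr]; lra.
by have := le_ln1Dx w_gtN1; lra.
Qed.

Lemma sqr_div_le_ln1D (p q : R) : 0 <= p -> 0 <= q -> q <= 1 ->
  q ^+ 2 / (1 + p ^+ 2) <= 4 * ln (1 + q / (1 + p)).
Proof.
move=> p0 q0 q1; have w0 : 0 <= q / (1 + p) by rewrite divr_ge0 //; lra.
apply: le_trans (_ : 4 * (q / (1 + p) / (1 + q / (1 + p))) <= _); last first.
  by rewrite ler_pM2l //; exact: div1D_le_ln1D.
have -> : q / (1 + p) / (1 + q / (1 + p)) = q / (1 + p + q) by field; lra.
rewrite ler_pdivrMr; last by nra.
have -> : 4 * (q / (1 + p + q)) * (1 + p ^+ 2) = 4 * q * (1 + p ^+ 2) / (1 + p + q).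
  by field; lra.
rewrite ler_pdivlMr; last by lra.
have : q * (1 + p + q) <= 4 * (1 + p ^+ 2) by nra.
nra.
Qed.

Lemma sqrD_le_mul_pow4 (p q : R) : 0 <= p -> 0 <= q ->
  1 + (p + q) ^+ 2 <= (1 + p ^+ 2) * (1 + q / (1 + p)) ^+ 4.
Proof.
move=> p0 q0; set w := q / (1 + p).
have w0 : 0 <= w by rewrite /w divr_ge0 //; lra.
have -> : q = w * (1 + p) by rewrite /w divfK //; lra.
clearbody w; rewrite -subr_ge0.
have -> : (1 + p ^+ 2) * (1 + w) ^+ 4 - (1 + (p + w * (1 + p)) ^+ 2)
    = w * (2 * p ^+ 2 - 2 * p + 4) + w ^+ 2 * (5 * p ^+ 2 - 2 * p + 5)
      + (1 + p ^+ 2) * (4 * w ^+ 3 + w ^+ 4) by ring.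
have w34 : 0 <= 4 * w ^+ 3 + w ^+ 4 by rewrite addr_ge0 ?mulr_ge0 ?exprn_ge0.
have coef1 : 0 <= 2 * p ^+ 2 - 2 * p + 4 by nra.
have coef2 : 0 <= 5 * p ^+ 2 - 2 * p + 5 by nra.
have p2 : 0 <= 1 + p ^+ 2 by nra.
by rewrite !addr_ge0 // !mulr_ge0 // sqr_ge0.
Qed.

Lemma ln1D_sub_le (p q r : R) : 0 <= p -> 0 <= q -> 0 <= r -> r <= (p + q) ^+ 2 ->
  ln (1 + r) - ln (1 + p ^+ 2) <= 4 * ln (1 + q / (1 + p)).
Proof.
move=> p0 q0 r0 rpq; have w0 : 0 <= q / (1 + p) by rewrite divr_ge0 //; lra.
have p2 : 0 < 1 + p ^+ 2 by rewrite ltr_pwDl ?sqr_ge0.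
have : ln (1 + r) <= ln ((1 + p ^+ 2) * (1 + q / (1 + p)) ^+ 4).
  rewrite ler_ln ?posrE ?mulr_gt0 ?exprn_gt0 //; try lra.
  by have := sqrD_le_mul_pow4 p0 q0; lra.
have w1 : 0 < 1 + q / (1 + p) by lra.
rewrite lnM ?posrE ?exprn_gt0 // lnXn // -mulr_natl; lra.
Qed.

End RealInequalities.

Lemma derive_along (R : numFieldType) (V W : normedModType R) (f : V -> W) (a v : V) :
  derive f a v = derive1 (fun h : R => f (h *: v + a)) 0.
Proof.
rewrite /derive /derive1; congr lim; apply: congr2 => //; apply: funext => h /=.
by rewrite addr0 scale0r add0r.
Qed.

Section RadialDerivatives.
Variables (R : realType) (d : nat) (y : 'rV[R]_d).
Implicit Types (x v : 'rV[R]_d).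

Lemma is_derive_radial_line (phi : R -> R) (D : R) x v :
  is_derive (enorm (x - y) ^+ 2) 1 phi D ->
  is_derive (0 : R) 1 (fun h : R => phi (enorm (h *: v + x - y) ^+ 2))
    (D * (2 * dotp (x - y) v)).
Proof.
move=> phiD.
have -> : (fun h : R => phi (enorm (h *: v + x - y) ^+ 2)) = phi \o
    (fun h => enorm (x - y) ^+ 2 + h * (2 * dotp (x - y) v) + h ^+ 2 * enorm v ^+ 2).
  apply: funext => h /=; rewrite -addrA [h *: v + _]addrC (sqr_enormD (x - y)) sqr_enormZ dotpZr.
  by congr phi; ring.
apply: is_derive1_comp; first by rewrite /= mul0r expr0n /= mul0r !addr0.
by apply: is_derive_eq; rewrite /GRing.scale /=; ring.
Qed.

Lemma derive_radial (phi : R -> R) (D : R) x v :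
  is_derive (enorm (x - y) ^+ 2) 1 phi D ->
  derive (fun w => phi (enorm (w - y) ^+ 2)) x v = D * (2 * dotp (x - y) v).
Proof.
move=> phiD; rewrite derive_along derive1E.
by have [] := is_derive_radial_line v phiD.
Qed.

Lemma derive2_radial (phi phi' : R -> R) (D2 : R) x v1 v2 :
  (forall r : R, 0 <= r -> is_derive r 1 phi (phi' r)) ->
  is_derive (enorm (x - y) ^+ 2) 1 phi' D2 ->
  derive (fun w => derive (fun w => phi (enorm (w - y) ^+ 2)) w v1) x v2 =
    D2 * (2 * dotp (x - y) v1) * (2 * dotp (x - y) v2)
    + phi' (enorm (x - y) ^+ 2) * (2 * dotp v1 v2).
Proof.
move=> phi_phi' phi'D2.
have -> : (fun w => derive (fun w => phi (enorm (w - y) ^+ 2)) w v1) =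
    (fun w => phi' (enorm (w - y) ^+ 2) * (2 * dotp (w - y) v1)).
  by apply: funext => w; apply/derive_radial/phi_phi'/sqr_ge0.
have dline : is_derive (0 : R) 1 (fun h : R => 2 * dotp (h *: v2 + x - y) v1)
    (2 * dotp v2 v1).
  have -> : (fun h : R => 2 * dotp (h *: v2 + x - y) v1) =
      (fun h => 2 * dotp (x - y) v1 + h * (2 * dotp v2 v1)).
    by apply: funext => h; rewrite -addrA (dotpDl (h *: v2)) dotpZl; ring.
  by apply: is_derive_eq; rewrite /GRing.scale /=; ring.
rewrite derive_along derive1E.
have [_ ->] := is_deriveM (is_derive_radial_line v2 phi'D2) dline.
by rewrite scale0r add0r /GRing.scale /= [dotp v2 v1]dotpC; ring.
Qed.

Lemma grad_radial (phi : R -> R) (D : R) x :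
  is_derive (enorm (x - y) ^+ 2) 1 phi D ->
  grad (fun w => phi (enorm (w - y) ^+ 2)) x = (2 * D) *: (x - y).
Proof.
move=> phiD; apply/rowP => i.
by rewrite mxE derive_radial // dotp_ebasis [RHS]mxE; ring.
Qed.

Lemma hess_radial (phi phi' : R -> R) (D2 : R) x :
  (forall r : R, 0 <= r -> is_derive r 1 phi (phi' r)) ->
  is_derive (enorm (x - y) ^+ 2) 1 phi' D2 ->
  hess (fun w => phi (enorm (w - y) ^+ 2)) x =
    (4 * D2) *: ((x - y)^T *m (x - y)) + (2 * phi' (enorm (x - y) ^+ 2))%:M.
Proof.
move=> phi_phi' phi'D2; apply/matrixP => i j.
rewrite mxE derive2_radial // dotp_ebasis2 !dotp_ebasis.
by rewrite !mxE big_ord1 !mxE -mulr_natr; ring.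
Qed.

End RadialDerivatives.

Section RealCalculus.
Variable R : realType.
Implicit Types f df : R -> R.

Lemma le_tangent_nincr_derive f df (c a b : R) :
  (forall r, c <= r -> is_derive r 1 f (df r)) ->
  (forall r s, c <= r -> r <= s -> df s <= df r) ->
  c <= a -> c <= b -> f b - f a <= df a * (b - a).
Proof.
move=> f_df df_nincr ca cb.
have f_cont p q : c <= p -> {within `[p, q], continuous f}.
  move=> cp; apply: derivable_within_continuous => r; rewrite in_itv /= => /andP[pr _].
  by have [] := f_df r (le_trans cp pr).
have f_df_itv p q : c <= p -> forall r, r \in `]p, q[ -> is_derive r 1 f (df r).
  by move=> cp r; rewrite in_itv /= => /andP[pr _]; apply: f_df; lra.
have [ab|ba|<-] := ltgtP a b; last by rewrite !subrr mulr0.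
- have [r] := MVT ab (f_df_itv _ _ ca) (f_cont _ _ ca).
  rewrite in_itv /= => /andP[ar rb] ->.
  by rewrite ler_wpM2r ?subr_ge0 ?(ltW ab) // df_nincr // ltW.
- have [r] := MVT ba (f_df_itv _ _ cb) (f_cont _ _ cb).
  rewrite in_itv /= => /andP[br ra] fab.
  have : df a <= df r by apply: df_nincr; lra.
  have -> : f b - f a = df r * (b - a) by rewrite -opprB fab; ring.
  nra.
Qed.

Lemma is_derive_1Dx (r : R) : is_derive r 1 (fun s : R => 1 + s) 1.
Proof. by apply: is_derive_eq; ring. Qed.

Lemma is_derive_comp_ln1D f (r : R) : -1 < r -> derivable f (ln (1 + r)) 1 ->
  is_derive r 1 (fun s => f (ln (1 + s))) (derive1 f (ln (1 + r)) / (1 + r)).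
Proof.
move=> r1 df; have r0 : 0 < 1 + r by lra.
have dln : is_derive r 1 (fun s => ln (1 + s)) (1 + r)^-1.
  by have := is_derive1_comp (is_derive1_ln r0) (is_derive_1Dx r); rewrite mulr1.
rewrite (derive1E f).
by have := is_derive1_comp (g := fun s => ln (1 + s)) (x := r) (derivableP df) dln.
Qed.

Lemma is_derive_comp_ln1D_div f (r : R) : -1 < r -> derivable f (ln (1 + r)) 1 ->
  is_derive r 1 (fun s => f (ln (1 + s)) / (1 + s))
    ((derive1 f (ln (1 + r)) - f (ln (1 + r))) / (1 + r) ^+ 2).
Proof.
move=> r1 df; have r0 : 1 + r != 0 by rewrite gt_eqF //; lra.
have dinv : is_derive r 1 (fun s => (1 + s)^-1) (- (1 + r) ^- 2).
  by apply: is_derive_eq (is_deriveV r0 (is_derive_1Dx r)) _; rewrite /GRing.scale /= mulr1.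
apply: is_derive_eq (is_deriveM (is_derive_comp_ln1D r1 df) dinv) _.
by rewrite /GRing.scale /=; field.
Qed.

End RealCalculus.

Section IntegralMonotone.
Local Open Scope ereal_scope.
Context d (T : measurableType d) (R : realType) (mu : {measure set T -> \bar R}).

Lemma ge0_le_integral_nonmeas (D : set T) (f g : T -> \bar R) :
  (forall x, D x -> 0 <= f x) -> (forall x, D x -> f x <= g x) ->
  \int[mu]_(x in D) f x <= \int[mu]_(x in D) g x.
Proof.
move=> f0 fg; have g0 x : D x -> 0 <= g x by move=> Dx; exact: le_trans (f0 x Dx) (fg x Dx).
rewrite !ge0_integralE //; apply: le_ereal_sup => _ [h /= hf <-]; exists h => //= x.
apply: le_trans (hf x) _; rewrite /patch; case: ifPn => // /set_mem; exact: fg.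
Qed.

(* No measurability is assumed: the jump integrand of [levy_gen] is only
   compared pointwise with a measurable bound. *)
Lemma le_integral_nonmeas (D : set T) (f g : T -> \bar R) :
  (forall x, D x -> f x <= g x) ->
  \int[mu]_(x in D) f x <= \int[mu]_(x in D) g x.
Proof.
move=> fg; have {}fg : {in D, forall x, f x <= g x} by move=> x /set_mem; exact: fg.
rewrite [X in X <= _]integralE [X in _ <= X]integralE.
apply: leeB; apply: ge0_le_integral_nonmeas => x Dx.
- exact: funepos_ge0.
- exact: (funepos_le fg (mem_set Dx)).
- exact: funeneg_ge0.
- exact: (funeneg_le fg (mem_set Dx)).
Qed.

End IntegralMonotone.

Section JumpIntegral.
Variables (R : realType) (d : nat).

Lemma enorm_continuous : continuous (@enorm R d).
Proof.
move=> u; apply: continuous_comp; last exact: sqrt_continuous.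
apply: (continuous_big (op := +%R)) => [|i _]; first exact: add_continuous.
move=> v; apply: (@continuous_comp _ _ _ (fun w : 'rV[R]_d => w 0 i) (fun r : R => r ^+ 2)).
  exact: coord_continuous.
exact: exprn_continuous.
Qed.

Lemma continuous_measurable_Rd (f : Rd R d -> R) :
  continuous (f : 'rV[R]_d -> R) -> measurable_fun setT f.
Proof.
move=> /continuousP f_cont.
apply: (measurability _ (RGenOpens.measurableE R)).
move=> _ [_ [a [b ->]] <-]; rewrite setTI; apply: sub_sigma_algebra.
exact/f_cont/interval_open.
Qed.

Lemma enorm_measurable : measurable_fun setT (@enorm R d : Rd R d -> R).
Proof. by apply: continuous_measurable_Rd; exact: enorm_continuous. Qed.

Lemma measurable_enorm_lt (ell : R) : measurable [set z : Rd R d | enorm z < ell].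
Proof.
have := enorm_measurable measurableT (measurable_itv `]-oo, ell[).
by rewrite setTI; congr measurable; apply/seteqP; split => z /=; rewrite in_itv.
Qed.

Lemma measurable_enorm_ge (ell : R) : measurable [set z : Rd R d | ell <= enorm z].
Proof.
have := enorm_measurable measurableT (measurable_itv `[ell, +oo[).
by rewrite setTI; congr measurable; apply/seteqP; split => z /=; rewrite in_itv /= andbT.
Qed.

Lemma integral_le_gnu_Hnu (mu : {measure set (Rd R d) -> \bar R}) (ell c : R)
    (x y : 'rV[R]_d) (F : Rd R d -> R) :
  0 <= c ->
  (forall z : Rd R d, F z <= if enorm z < ell then c * enorm z ^+ 2
                             else 4 * ln (1 + enorm z / (1 + enorm (x - y)))) ->
  (\int[mu]_(z in [set: Rd R d]) (F z)%:E <= c%:E * gnu ell mu + 4%:E * Hnu ell mu x y)%E.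
Proof.
move=> c0 FG; set p := enorm (x - y); have p0 : 0 <= p := enorm_ge0 _.
set small := [set z : Rd R d | enorm z < ell].
set large := [set z : Rd R d | ell <= enorm z].
have m_sqr : measurable_fun setT (fun z : Rd R d => enorm z ^+ 2).
  exact: measurable_funX enorm_measurable.
have m_ln : measurable_fun setT (fun z : Rd R d => ln (1 + enorm z / (1 + p))).
  apply: (measurableT_comp (f := @ln R) (g := fun z : Rd R d => 1 + enorm z / (1 + p))).
    exact: measurable_ln.
  by apply: measurable_funD => //; apply: measurable_funM => //; exact: enorm_measurable.
pose G (z : Rd R d) := if enorm z < ell then c * enorm z ^+ 2 else 4 * ln (1 + enorm z / (1 + p)).
have FleG : (\int[mu]_(z in setT) (F z)%:E <= \int[mu]_(z in setT) (G z)%:E)%E.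
  by apply: le_integral_nonmeas => z _; rewrite lee_fin; exact: FG.
apply: le_trans FleG _.
have -> : [set: Rd R d] = small `|` large.
  by apply/seteqP; split => // z _; case: (ltP (enorm z) ell); [left|right].
rewrite integral_setU; first last.
- by apply/disj_setPS => z []; rewrite /small /large /=; lra.
- apply/measurable_EFinP/measurable_funTS/measurable_fun_ifT => //.
    by apply: measurable_fun_ltr => //; exact: enorm_measurable.
  by apply: measurable_funM.
  by apply: measurable_funM.
- exact: measurable_enorm_ge.
- exact: measurable_enorm_lt.
apply: leeD.
  rewrite (eq_integral (fun z : Rd R d => c%:E * (enorm z ^+ 2)%:E)%E); last first.
    by move=> z /set_mem /= zs; rewrite /G zs EFinM.
  rewrite ge0_integralZl_EFin //.
  - exact: measurable_enorm_lt.
  - by move=> z _; rewrite lee_fin sqr_ge0.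
  - exact/measurable_EFinP/measurable_funTS.
rewrite (eq_integral (fun z : Rd R d => 4%:E * (ln (1 + enorm z / (1 + p)))%:E)%E); last first.
  by move=> z /set_mem /= zl; rewrite /G ltNge zl EFinM.
rewrite ge0_integralZl_EFin //.
- exact: measurable_enorm_ge.
- by move=> z _; rewrite lee_fin ln1D_ge0 // divr_ge0 ?addr_ge0 ?enorm_ge0.
- exact/measurable_EFinP/measurable_funTS.
Qed.

Lemma gnu_ge0 (ell : R) (mu : {measure set (Rd R d) -> \bar R}) : (0 <= gnu ell mu)%E.
Proof. by apply: integral_ge0 => z _; rewrite lee_fin sqr_ge0. Qed.

Lemma Hnu_ge0 (ell : R) (mu : {measure set (Rd R d) -> \bar R}) x y : (0 <= Hnu ell mu x y)%E.
Proof.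
by apply: integral_ge0 => z _; rewrite lee_fin ln1D_ge0 // divr_ge0 ?addr_ge0 ?enorm_ge0.
Qed.

End JumpIntegral.

Section LogLyapunov.
Variables (R : realType) (psi : R -> R).
Hypothesis psi_derivable : forall r, derivable psi r 1.
Hypothesis psi'_derivable : forall r, derivable (derive1 psi) r 1.
Hypothesis psi'_gt0_le1 : forall r, 0 <= r -> 0 < derive1 psi r <= 1.
Hypothesis psi''_le0 : forall r, 0 <= r -> derive1 (derive1 psi) r <= 0.

Local Notation phi := (fun r : R => psi (ln (1 + r))).
Local Notation dphi := (fun r : R => derive1 psi (ln (1 + r)) / (1 + r)).

Lemma psi'_nincr (a b : R) : 0 <= a -> a <= b -> derive1 psi b <= derive1 psi a.
Proof.
apply: ler0_derive1_nincry => [r _|r|]; first exact: psi'_derivable.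
  by rewrite in_itv /= andbT => /ltW; exact: psi''_le0.
by apply: derivable_within_continuous => r _; exact: psi'_derivable.
Qed.

Lemma psi_le_tangent (a b : R) : 0 <= a -> 0 <= b ->
  psi b - psi a <= derive1 psi a * (b - a).
Proof.
apply: (@le_tangent_nincr_derive R _ _ 0) => [r _|]; last exact: psi'_nincr.
by rewrite (derive1E psi); exact: derivableP.
Qed.

Lemma dphi_gt0_le (r : R) : 0 <= r -> 0 < dphi r <= (1 + r)^-1.
Proof.
move=> r0; have /andP[d0 d1] := psi'_gt0_le1 (ln1D_ge0 r0).
by rewrite divr_gt0 //= ?ler_piMl ?invr_ge0 //; lra.
Qed.

Lemma dphi_nincr (r s : R) : 0 <= r -> r <= s -> dphi s <= dphi r.
Proof.
move=> r0 rs; have s0 : 0 <= s by exact: le_trans rs.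
have /andP[d0 _] := psi'_gt0_le1 (ln1D_ge0 s0).
apply: ler_pM.
- exact: ltW.
- by rewrite invr_ge0; lra.
- by rewrite psi'_nincr ?ln1D_ge0 // ler_ln ?posrE ?lerD2l //; lra.
- by rewrite lef_pV2 ?posrE ?lerD2l //; lra.
Qed.

Lemma is_derive_phi (r : R) : 0 <= r -> is_derive r 1 phi (dphi r).
Proof. by move=> r0; apply: is_derive_comp_ln1D => //; lra. Qed.

Lemma phi_le_tangent (a b : R) : 0 <= a -> 0 <= b -> phi b - phi a <= dphi a * (b - a).
Proof.
apply: (@le_tangent_nincr_derive R _ _ 0) => [r|]; first exact: is_derive_phi.
exact: dphi_nincr.
Qed.

Lemma is_derive_dphi (r : R) : 0 <= r -> is_derive r 1 dphi
  ((derive1 (derive1 psi) (ln (1 + r)) - derive1 psi (ln (1 + r))) / (1 + r) ^+ 2).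
Proof. by move=> r0; apply: is_derive_comp_ln1D_div => //; lra. Qed.

Lemma small_jump_le d (u z : 'rV[R]_d) :
  phi (enorm (u + z) ^+ 2) - phi (enorm u ^+ 2)
    - dotp z ((2 * dphi (enorm u ^+ 2)) *: u) <= enorm z ^+ 2 / (1 + enorm u ^+ 2).
Proof.
have /andP[d0 d1] := dphi_gt0_le (sqr_ge0 (enorm u)).
have := phi_le_tangent (sqr_ge0 (enorm u)) (sqr_ge0 (enorm (u + z))).
rewrite sqr_enormD dotpZr [dotp z u]dotpC.
have : dphi (enorm u ^+ 2) * enorm z ^+ 2 <= enorm z ^+ 2 / (1 + enorm u ^+ 2).
  by rewrite mulrC ler_wpM2l ?sqr_ge0.
lra.
Qed.

Lemma large_jump_le d (u z : 'rV[R]_d) :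
  phi (enorm (u + z) ^+ 2) - phi (enorm u ^+ 2)
    <= 4 * ln (1 + enorm z / (1 + enorm u)).
Proof.
have u0 := enorm_ge0 u; have z0 := enorm_ge0 z.
have /andP[d0 d1] := psi'_gt0_le1 (ln1D_ge0 (sqr_ge0 (enorm u))).
have := psi_le_tangent (ln1D_ge0 (sqr_ge0 (enorm u))) (ln1D_ge0 (sqr_ge0 (enorm (u + z)))).
have := ln1D_sub_le u0 z0 (sqr_ge0 (enorm (u + z))).
have -> : enorm (u + z) ^+ 2 <= (enorm u + enorm z) ^+ 2.
  by rewrite sqr_enormD; have := dotp_le_enorm u z; nra.
have : 0 <= ln (1 + enorm z / (1 + enorm u)).
  by rewrite ln1D_ge0 // divr_ge0 //; lra.
nra.
Qed.

Variables (d : nat) (y : 'rV[R]_d).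
Local Notation V := (fun w : 'rV[R]_d => psi (ln (1 + enorm (w - y) ^+ 2))).

Lemma grad_V x : grad V x = (2 * dphi (enorm (x - y) ^+ 2)) *: (x - y).
Proof. exact: grad_radial (is_derive_phi (sqr_ge0 _)). Qed.

Lemma mxtrace_hess_V_le x (A : 'M[R]_d) : (forall v : 'rV[R]_d, 0 <= (v *m A *m v^T) 0 0) ->
  \tr (A *m hess V x) <= 2 * \tr A / (1 + enorm (x - y) ^+ 2).
Proof.
move=> A_psd; set r := enorm (x - y) ^+ 2; have r0 : 0 <= r := sqr_ge0 _.
rewrite (hess_radial (fun s s0 => is_derive_phi s0) (is_derive_dphi r0)).
rewrite mxtrace_mul_outerD_scalar.
have /andP[_ d1] := dphi_gt0_le r0; have trA := psd_mxtrace_ge0 A_psd.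
have d2 : (derive1 (derive1 psi) (ln (1 + r)) - derive1 psi (ln (1 + r))) / (1 + r) ^+ 2 <= 0.
  have /andP[p0 _] := psi'_gt0_le1 (ln1D_ge0 r0); have := psi''_le0 (ln1D_ge0 r0).
  by move=> p2; rewrite pmulr_lle0 ?invr_gt0 ?exprn_gt0 //; lra.
have := mulr_le0_ge0 d2 (A_psd (x - y)).
have : dphi r * \tr A <= (1 + r)^-1 * \tr A by rewrite ler_wpM2r.
lra.
Qed.

Lemma dotp_grad_V_le x (b : 'rV[R]_d) :
  dotp b (grad V x) <= 2 * Num.max (dotp (x - y) b) 0 / (1 + enorm (x - y) ^+ 2).
Proof.
set r := enorm (x - y) ^+ 2; have /andP[d0 d1] := dphi_gt0_le (sqr_ge0 (enorm (x - y))).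
rewrite grad_V dotpZr dotpC; set M := Num.max _ 0.
have DM : dotp (x - y) b <= M by rewrite le_max lexx.
have M0 : 0 <= M by rewrite le_max lexx orbT.
have : dphi r * dotp (x - y) b <= dphi r * M by rewrite ler_wpM2l // ltW.
have : dphi r * M <= (1 + r)^-1 * M by rewrite ler_wpM2r.
lra.
Qed.

Lemma jump_integrand_le (ell : R) x z : ell <= 1 ->
  V (x + z) - V x - (if enorm z <= ell then dotp z (grad V x) else 0)
  <= if enorm z < ell then 2 / (1 + enorm (x - y) ^+ 2) * enorm z ^+ 2
     else 4 * ln (1 + enorm z / (1 + enorm (x - y))).
Proof.
move=> ell1; rewrite /= [x + z - y]addrAC grad_V.
have /= small := small_jump_le (x - y) z; have /= large := large_jump_le (x - y) z.
have z0 := enorm_ge0 z; have u0 := enorm_ge0 (x - y).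
have sq0 : 0 <= enorm z ^+ 2 / (1 + enorm (x - y) ^+ 2) by rewrite divr_ge0 ?sqr_ge0 // addr_ge0 ?sqr_ge0.
case: (ltgtP (enorm z) ell) => [zl|zg|ze].
- lra.
- by rewrite subr0.
- (* on the sphere |z| = ell the compensated jump goes to the large-jump term *)
  apply: le_trans small _.
  by apply: sqr_div_le_ln1D => //; rewrite ze.
Qed.

End LogLyapunov.

Lemma ge0_le_mul2eD (R : realDomainType) (s X : R) (g h : \bar R) :
  0 < s -> 0 <= X -> (0 <= g)%E -> (0 <= h)%E ->
  ((2 * X)%:E + ((2 / s)%:E * g + 4%:E * h)
    <= 2%:E * (X%:E + g * (s^-1)%:E + 2%:E * h))%E.
Proof.
move=> s0 X0 g0 h0; have si0 : (0 <= (s^-1)%:E)%E by rewrite lee_fin invr_ge0 ltW.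
rewrite ge0_muleDr ?adde_ge0 ?mule_ge0 // ge0_muleDr ?mule_ge0 // -EFinM.
have -> : (2%:E * (g * (s^-1)%:E) = (2 / s)%:E * g)%E by rewrite muleCA -EFinM muleC.
have -> : (2%:E * (2%:E * h) = 4%:E * h)%E by rewrite muleA -EFinM -natrM.
by rewrite addeA.
Qed.

Theorem lemma2p3 (R : realType) (d : nat) (ell : R)
  (a : R -> 'rV[R]_d -> 'M[R]_d) (b : R -> 'rV[R]_d -> 'rV[R]_d)
  (nu : R -> 'rV[R]_d -> {measure set (Rd R d) -> \bar R})
  (psi : R -> R) (y : 'rV[R]_d) :
  (1 <= d)%N ->
  0 < ell -> ell <= (Num.sqrt 2)^-1 ->
  (forall t x, (a t x)^T = a t x) ->
  (forall t x (v : 'rV[R]_d), 0 <= (v *m a t x *m v^T) 0 0) ->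
  (forall t x, nu t x [set 0 : Rd R d] = 0%E) ->
  (forall t x, (gnu ell (nu t x) < +oo)%E) ->
  (forall t x, (nu t x [set z : Rd R d | (ell <= enorm z)%R] < +oo)%E) ->
  (forall r, derivable psi r 1) ->
  (forall r, derivable (derive1 psi) r 1) ->
  continuous (derive1 (derive1 psi)) ->
  (forall r, 0 <= r -> 0 <= psi r) ->
  psi x @[x --> +oo] --> +oo ->
  (forall r, 0 <= r -> 0 < (derive1 psi) r <= 1) ->
  (forall r, 0 <= r -> (derive1 (derive1 psi)) r <= 0) ->
  forall t x, 0 <= t ->
  (levy_gen ell (a t x) (b t x) (nu t x)
     (fun x' => psi (ln (1 + enorm (x' - y) ^+ 2))) x
   <= 2%:E * (((\tr (a t x) + Num.max (dotp (x - y) (b t x)) 0)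
                / (1 + enorm (x - y) ^+ 2))%:E
              + gnu ell (nu t x) * ((1 + enorm (x - y) ^+ 2)^-1)%:E
              + 2%:E * Hnu ell (nu t x) x y))%E.
Proof.
(* not needed: d >= 1, ell > 0, symmetry of a, the conditions on nu,
   continuity of psi'', psi >= 0, psi -> +oo and t >= 0 *)
move=> _ _ ell_le _ a_psd _ _ _ psi_d psi'_d _ _ _ psi'_bnd psi''_le0 t x _.
have ell1 : ell <= 1 := le_trans ell_le (invsqrt2_le1 R).
set s := 1 + enorm (x - y) ^+ 2; have s0 : 0 < s by rewrite ltr_pwDl ?sqr_ge0.
set X := (\tr (a t x) + Num.max (dotp (x - y) (b t x)) 0) / s.
have X0 : 0 <= X.
  rewrite divr_ge0 ?(ltW s0) // addr_ge0 //; first exact: psd_mxtrace_ge0.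
  by rewrite le_max lexx orbT.
have local_le := lerD (mxtrace_hess_V_le psi_d psi'_d psi'_bnd psi''_le0 y x (a_psd t x))
  (dotp_grad_V_le psi_d psi'_bnd y x (b t x)).
have jump_le := integral_le_gnu_Hnu (nu t x) (c := 2 / s) (x := x) (y := y)
  (divr_ge0 (ler0n _ 2) (ltW s0))
  (fun z => jump_integrand_le psi_d psi'_d psi'_bnd psi''_le0 y x z ell1).
apply: (@le_trans _ _ ((2 * X)%:E + ((2 / s)%:E * gnu ell (nu t x)
                                    + 4%:E * Hnu ell (nu t x) x y))%E).
  apply: leeD jump_le; rewrite lee_fin; apply: le_trans local_le _.
  by rewrite /X -/s; lra.
exact: ge0_le_mul2eD s0 X0 (gnu_ge0 _ _) (Hnu_ge0 _ _ _ _).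
Qed.
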